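(* Let $n\ge 1$, $\lambda>0$, and let $\sigma_\lambda:\mathbb{R}^n\to\mathbb{R}^n$ be the softmax map $\sigma_\lambda(\mathbf{x})_i=\exp(\lambda x_i)/\sum_{j=1}^n\exp(\lambda x_j)$. Then for every $p\in[1,\infty]$: (a) for every $\mathbf{x}\in\mathbb{R}^n$, $\|J_{\sigma_1}(\mathbf{x})\|_p\le \tfrac12$, where $J_{\sigma_1}(\mathbf{x})$ is the Jacobian matrix of $\sigma_1$ at $\mathbf{x}$; (b) for all $\mathbf{x},\mathbf{y}\in\mathbb{R}^n$, $\|\sigma_\lambda(\mathbf{x})-\sigma_\lambda(\mathbf{y})\|_p\le \tfrac{\lambda}{2}\|\mathbf{x}-\mathbf{y}\|_p$.
   Context: For $p\in[1,\infty)$, $\|\mathbf{x}\|_p=(\sum_i|x_i|^p)^{1/p}$ and $\|\mathbf{x}\|_\infty=\max_i|x_i|$. For a matrix $A\in\mathbb{R}^{n\times n}$, $\|A\|_p=\sup_{\mathbf{v}\ne 0}\|A\mathbf{v}\|_p/\|\mathbf{v}\|_p$ denotes the operator norm induced by the vector $\ell_p$ norm. *)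

From HB Require Import structures.
From mathcomp Require Import all_boot all_order all_algebra.
From mathcomp Require Import all_classical all_reals all_analysis.
Set Implicit Arguments. Unset Strict Implicit. Unset Printing Implicit Defensive.
Import Order.TTheory GRing.Theory Num.Theory.
Import numFieldNormedType.Exports.
Local Open Scope ring_scope.

Definition softmax (R : realType) (n : nat) (lam : R) (x : 'cV[R]_n) : 'cV[R]_n :=
  \col_i (expR (lam * x i 0) / \sum_(j < n) expR (lam * x j 0)).

Definition jacobian_mx (R : realType) (n : nat) (f : 'cV[R]_n -> 'cV[R]_n)
  (x : 'cV[R]_n) : 'M[R]_n :=
  \matrix_(i, j) ('D_(delta_mx j 0 : 'cV[R]_n) (fun y : 'cV[R]_n => f y i 0) x).

(* vector l_p norm, p in [1, +oo] encoded as an extended real *)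
Definition pnorm (R : realType) (n : nat) (p : \bar R) (v : 'cV[R]_n) : R :=
  match p with
  | EFin r => (\sum_(i < n) `|v i 0| `^ r) `^ r^-1
  | _ => \big[Num.max/0]_(i < n) `|v i 0|
  end.

Definition opnorm (R : realType) (n : nat) (p : \bar R) (A : 'M[R]_n) : R :=
  sup [set (pnorm p (A *m v) / pnorm p v) | v in [set v : 'cV[R]_n | v != 0]].

From HB Require Import structures.
From mathcomp Require Import all_boot all_order all_algebra.
From mathcomp Require Import all_classical all_reals all_analysis.
From mathcomp Require Import ring lra.
Set Implicit Arguments. Unset Strict Implicit. Unset Printing Implicit Defensive.
Import Order.TTheory GRing.Theory Num.Theory.
Import numFieldNormedType.Exports.
Local Open Scope ring_scope.

(* The Jacobian of [softmax lam] at [x] is [lam (diag s - s s^T)], where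
   [s = softmax lam x] is a probability vector.  Its entries are
   [lam s_i (1 - s_i)] on the diagonal and [- lam s_i s_j] off it, so every row
   and every column of [|J|] sums to [2 lam s_i (1 - s_i) <= lam / 2], and the
   Schur test bounds every l_p operator norm of [J] by [lam / 2].
   For the Lipschitz bound, pair [softmax lam x - softmax lam y] with a test
   vector [w]: the mean value theorem applied to
   [t |-> <w, softmax lam (y + t (x - y))>] replaces the difference by
   [J(xi) (x - y)] for some [xi], and choosing [w] dual to the difference turns
   this into the norm inequality. *)

Section LpNorms.
Variable R : realType.

Lemma powRVK (r x : R) : 0 < r -> 0 <= x -> (x `^ r^-1) `^ r = x.
Proof. by move=> r0 x0; rewrite -powRrM mulVf ?gt_eqF ?powRr1. Qed.

Lemma hoelder_sum (k : nat) (a b : 'I_k -> R) (p q : R) :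
  (forall i, 0 <= a i) -> (forall i, 0 <= b i) -> 0 < p -> 0 < q ->
  p^-1 + q^-1 = 1 ->
  \sum_(i < k) a i * b i <=
  (\sum_(i < k) a i `^ p) `^ p^-1 * (\sum_(i < k) b i `^ q) `^ q^-1.
Proof.
move=> + + p0 q0 pq.
elim: k a b => [|k IH] a b a0 b0; first by rewrite !big_ord0 mulr_ge0 ?powR_ge0.
have sum_ge0 (c : 'I_k -> R) r : 0 <= \sum_(i < k) c i `^ r.
  by apply: sumr_ge0 => i _; exact: powR_ge0.
rewrite !big_ord_recr /=.
apply: le_trans (lerD (IH _ _ (fun i => a0 _) (fun i => b0 _)) (lexx _)) _.
apply: le_trans (hoelder2 _ _ _ _ p0 q0 pq) _ => //; try exact: powR_ge0.
rewrite le_eqVlt; apply/predU1P; left.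
by congr (_ `^ _ * _ `^ _); congr (_ + _); exact: powRVK.
Qed.

(* Hoelder with exponents [r / (r - 1)] and [r], applied to [w^(1-1/r)] and
   [w^(1/r) t]. *)
Lemma powR_wsum_le (k : nat) (w t : 'I_k -> R) (r : R) :
  (forall i, 0 <= w i) -> (forall i, 0 <= t i) -> 1 <= r ->
  (\sum_(i < k) w i * t i) `^ r <=
  (\sum_(i < k) w i) `^ (r - 1) * \sum_(i < k) w i * t i `^ r.
Proof.
move=> w0 t0; rewrite le_eqVlt => /predU1P[<-|r1].
  rewrite subrr powRr0 mul1r powRr1; last by apply: sumr_ge0 => i _; rewrite mulr_ge0.
  by apply: ler_sum => i _; rewrite powRr1.
have r0 : 0 < r by apply: lt_trans r1.
set q := (1 - r^-1)^-1.
have q0 : 0 < q by rewrite invr_gt0 subr_gt0 invf_lt1.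
have qr : q^-1 + r^-1 = 1 by rewrite invrK subrK.
have := hoelder_sum (fun i => powR_ge0 (w i) q^-1)
  (fun i => mulr_ge0 (powR_ge0 (w i) r^-1) (t0 i)) q0 r0 qr.
have -> : \sum_(i < k) w i `^ q^-1 * (w i `^ r^-1 * t i) = \sum_(i < k) w i * t i.
  by apply: eq_bigr => i _; rewrite mulrA -powRD ?qr ?oner_eq0 ?powRr1.
have -> : \sum_(i < k) (w i `^ q^-1) `^ q = \sum_(i < k) w i.
  by apply: eq_bigr => i _; rewrite powRVK.
have -> : \sum_(i < k) (w i `^ r^-1 * t i) `^ r = \sum_(i < k) w i * t i `^ r.
  by apply: eq_bigr => i _; rewrite powRM ?powR_ge0 // powRVK.
move=> holder; apply: le_trans (ge0_ler_powR (ltW r0) _ _ holder) _.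
- by rewrite nnegrE; apply: sumr_ge0 => i _; rewrite mulr_ge0.
- by rewrite nnegrE mulr_ge0 ?powR_ge0.
rewrite powRM ?powR_ge0 // -!powRrM mulVf ?gt_eqF // powRr1 ?powR_ge0 //.
rewrite /q invrK mulrBl mul1r mulVf ?gt_eqF // mulrC.
by apply: sumr_ge0 => i _; rewrite mulr_ge0 ?powR_ge0.
Qed.

Lemma pnorm_ge0 (n : nat) (p : \bar R) (v : 'cV[R]_n) : 0 <= pnorm p v.
Proof.
case: p => [r| |] /=; first exact: powR_ge0.
- by elim/big_ind: _ => // a b a0 b0; rewrite le_max a0.
- by elim/big_ind: _ => // a b a0 b0; rewrite le_max a0.
Qed.

Lemma pnorm_gt0 (n : nat) (p : \bar R) (v : 'cV[R]_n) :
  (1 <= p)%E -> v != 0 -> 0 < pnorm p v.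
Proof.
move=> p1 v_neq0.
have [i vi_neq0] : exists i, v i 0 != 0.
  apply/not_existsP => vi0; move/eqP: v_neq0; apply; apply/matrixP => i j.
  by rewrite (ord1 j) [RHS]mxE; have := vi0 i; case: eqP.
case: p p1 => [r| |] //= p1.
  apply: powR_gt0; rewrite (bigD1 i) //=.
  apply: (@lt_le_trans _ _ (`|v i 0| `^ r)); first by rewrite powR_gt0 ?normr_gt0.
  by rewrite lerDl; apply: sumr_ge0 => j _; exact: powR_ge0.
by apply: (@lt_le_trans _ _ `|v i 0|); rewrite ?normr_gt0 ?le_bigmax.
Qed.

Lemma normr_mulmx_le (n : nat) (A : 'M[R]_n) (v : 'cV[R]_n) i :
  `|(A *m v) i 0| <= \sum_j `|A i j| * `|v j 0|.
Proof.
rewrite mxE; apply: le_trans (ler_norm_sum _ _ _) _.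
by apply: ler_sum => j _; rewrite normrM.
Qed.

Section SchurTest.
Variables (n : nat) (A : 'M[R]_n) (c : R).
Hypotheses (c0 : 0 <= c) (row_le : forall i, \sum_j `|A i j| <= c)
  (col_le : forall j, \sum_i `|A i j| <= c).

(* Each row is a weighted power mean with total weight at most [c]; the
   column bound then controls the sum over rows. *)
Lemma sum_powR_mulmx_le (r : R) (v : 'cV[R]_n) : 1 <= r ->
  \sum_i `|(A *m v) i 0| `^ r <= c `^ r * \sum_j `|v j 0| `^ r.
Proof.
move=> r1; have r0 : 0 < r by apply: lt_le_trans r1.
apply: (@le_trans _ _ (\sum_i (\sum_j `|A i j| * `|v j 0|) `^ r)).
  apply: ler_sum => i _; apply: ge0_ler_powR (normr_mulmx_le A v i) => //.
  - exact: ltW.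
  - by rewrite nnegrE; apply: sumr_ge0 => j _; rewrite mulr_ge0.
apply: (@le_trans _ _ (\sum_i c `^ (r - 1) * \sum_j `|A i j| * `|v j 0| `^ r)).
  apply: ler_sum => i _.
  have w0 j : 0 <= `|A i j| by [].
  have t0 j : 0 <= `|v j 0| by [].
  apply: le_trans (powR_wsum_le w0 t0 r1) _.
  apply: ler_wpM2r; first by apply: sumr_ge0 => j _; rewrite mulr_ge0 ?powR_ge0.
  by apply: ge0_ler_powR; rewrite ?nnegrE ?subr_ge0 ?sumr_ge0.
rewrite -mulr_sumr exchange_big /= -(mulr_powRB1 c0 r0) [c * _]mulrC -mulrA.
rewrite ler_wpM2l ?powR_ge0 // mulr_sumr; apply: ler_sum => j _.
by rewrite -mulr_suml ler_wpM2r ?powR_ge0.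
Qed.

Lemma pnorm_mulmx_le (p : \bar R) (v : 'cV[R]_n) : (1 <= p)%E ->
  pnorm p (A *m v) <= c * pnorm p v.
Proof.
case: p => [r| |] //= p1.
  have r0 : 0 < r by apply: lt_le_trans (p1 : 1 <= r).
  have ri0 : 0 <= r^-1 by rewrite invr_ge0 ltW.
  have sum_ge0 (u : 'cV[R]_n) : 0 <= \sum_i `|u i 0| `^ r.
    by apply: sumr_ge0 => i _; exact: powR_ge0.
  apply: le_trans (ge0_ler_powR ri0 _ _ (sum_powR_mulmx_le v p1)) _.
  - by rewrite nnegrE.
  - by rewrite nnegrE mulr_ge0 ?powR_ge0.
  by rewrite powRM ?powR_ge0 // -powRrM mulfV ?gt_eqF // powRr1.
apply: bigmax_le => [|i _]; first by rewrite mulr_ge0 // (pnorm_ge0 +oo).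
apply: le_trans (normr_mulmx_le A v i) _.
apply: (@le_trans _ _ (\sum_j `|A i j| * \big[Num.max/0]_k `|v k 0|)).
  by apply: ler_sum => j _; rewrite ler_wpM2l // le_bigmax.
by rewrite -mulr_suml ler_wpM2r // (pnorm_ge0 +oo).
Qed.

End SchurTest.

Lemma sum_indicator (n : nat) (i : 'I_n) (f : 'I_n -> R) :
  \sum_k (k == i)%:R * f k = f i.
Proof.
rewrite (bigD1 i) //= eqxx mul1r big1 ?addr0 // => k /negPf ->.
by rewrite mul0r.
Qed.

Lemma pnorm_le_of_sum_le (n : nat) (r : R) (u z : 'cV[R]_n) : 1 <= r ->
  \sum_(i < n) `|u i 0| `^ r <= \sum_(i < n) `|u i 0| `^ (r - 1) * `|z i 0| ->
  pnorm r%:E u <= pnorm r%:E z.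
Proof.
rewrite /= le_eqVlt => /predU1P[<-|r1] S_le.
  have sum_ge0 (v : 'cV[R]_n) : 0 <= \sum_(i < n) `|v i 0| `^ 1.
    by apply: sumr_ge0 => i _; exact: powR_ge0.
  rewrite invr1 !powRr1 //.
  apply: (le_trans S_le); apply: ler_sum => i _.
  by rewrite subrr powRr0 mul1r powRr1.
have r0 : 0 < r by apply: lt_trans r1.
set S := \sum_(i < n) `|u i 0| `^ r in S_le *.
set q := (1 - r^-1)^-1.
have q0 : 0 < q by rewrite invr_gt0 subr_gt0 invf_lt1.
have qr : q^-1 + r^-1 = 1 by rewrite invrK subrK.
have rq : (r - 1) * q = r.
  by rewrite /q; field; rewrite gt_eqF // subr_eq0 gt_eqF.
have := hoelder_sum (fun i => powR_ge0 `|u i 0| (r - 1))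
  (fun i => normr_ge0 (z i 0)) q0 r0 qr.
have -> : \sum_(i < n) (`|u i 0| `^ (r - 1)) `^ q = S.
  by apply: eq_bigr => i _; rewrite -powRrM rq.
move=> /(le_trans S_le).
have [->|S_neq0] := eqVneq S 0.
  by move=> _; rewrite powR0 ?invr_eq0 ?gt_eqF // powR_ge0.
have S0 : 0 <= S by apply: sumr_ge0 => i _; exact: powR_ge0.
have Sq : 0 < S `^ q^-1 by rewrite powR_gt0 // lt0r S_neq0.
have S_split : S = S `^ r^-1 * S `^ q^-1.
  by rewrite -powRD addrC qr ?powRr1 ?oner_eq0.
by rewrite {1}S_split mulrC ler_pM2l.
Qed.

(* For finite [r] the test vector is [w = sg(u) |u|^(r-1)], for which
   [<w, u> = |u|_r^r]; for [r = +oo] it is an indicator vector. *)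
Lemma pnorm_le_dual (n : nat) (p : \bar R) (u : 'cV[R]_n) (K : R) :
  (1 <= p)%E ->
  (forall w : 'I_n -> R, exists2 z : 'cV[R]_n,
     pnorm p z <= K & \sum_i w i * u i 0 = \sum_i w i * z i 0) ->
  pnorm p u <= K.
Proof.
case: p => [r| |] //= r1 dual; last first.
  have [z zK _] := dual (fun=> 0).
  apply: bigmax_le => [|i _]; first by apply: le_trans zK; exact: (pnorm_ge0 +oo).
  have [z' z'K] := dual (fun k => (k == i)%:R); rewrite !sum_indicator => ->.
  by apply: le_trans z'K; exact: le_bigmax.
have r0 : 0 < r by apply: lt_le_trans (r1 : 1 <= r).
have [z zK uz] := dual (fun i => Num.sg (u i 0) * `|u i 0| `^ (r - 1)).
apply: le_trans zK; apply: (pnorm_le_of_sum_le r1).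
have -> : \sum_(i < n) `|u i 0| `^ r =
          \sum_(i < n) Num.sg (u i 0) * `|u i 0| `^ (r - 1) * u i 0.
  by apply: eq_bigr => i _; rewrite mulrAC -normrEsg mulr_powRB1.
rewrite uz; apply: ler_sum => i _.
apply: le_trans (ler_norm _) _; rewrite !normrM normr_sg ger0_norm ?powR_ge0 //.
by case: (_ != 0); rewrite ?mul0r ?mul1r // mulr_ge0 ?powR_ge0.
Qed.

Lemma opnorm_le (n : nat) (p : \bar R) (A : 'M[R]_n) (c : R) :
  (0 < n)%N -> (1 <= p)%E -> (forall v, pnorm p (A *m v) <= c * pnorm p v) ->
  opnorm p A <= c.
Proof.
move=> n0 p1 A_le; apply: ge_sup.
  have one_neq0 : const_mx 1 != 0 :> 'cV[R]_n.
    by apply/eqP => /matrixP/(_ (Ordinal n0) 0)/eqP; rewrite !mxE oner_eq0.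
  exists (pnorm p (A *m const_mx 1) / pnorm p (const_mx 1 : 'cV[R]_n)).
  by exists (const_mx 1).
by move=> _ [v v_neq0 <-]; rewrite ler_pdivrMr ?pnorm_gt0.
Qed.

End LpNorms.

Section SoftmaxJacobian.
Variables (R : realType) (n : nat).
Implicit Types (lam : R) (s v x : 'cV[R]_n).

Definition softmax_jac lam s : 'M[R]_n := lam *: (diag_mx s^T - s *m s^T).

Lemma softmax_jacE lam s i j :
  softmax_jac lam s i j = lam * (s i 0 * ((j == i)%:R - s j 0)).
Proof.
by rewrite !mxE big_ord1 !mxE eq_sym; congr (_ * _); rewrite mulrBr mulr_natr.
Qed.

Lemma softmax_jacC lam s i j : softmax_jac lam s i j = softmax_jac lam s j i.
Proof. by rewrite !softmax_jacE eq_sym; case: eqVneq => [->|_] //=; ring. Qed.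

Lemma softmax_jac_mulE lam s v i :
  (softmax_jac lam s *m v) i 0 = lam * (s i 0 * (v i 0 - \sum_j s j 0 * v j 0)).
Proof.
rewrite mxE (eq_bigr (fun j => lam * s i 0 * ((j == i)%:R * v j 0)
                              - lam * s i 0 * (s j 0 * v j 0))).
  by rewrite sumrB -!mulr_sumr sum_indicator; ring.
by move=> j _; rewrite softmax_jacE; ring.
Qed.

Section ProbabilityVector.
Variables (lam : R) (s : 'cV[R]_n).
Hypotheses (lam0 : 0 <= lam) (s0 : forall i, 0 <= s i 0) (s1 : \sum_i s i 0 = 1).

(* The row sum is [2 lam s_i (1 - s_i)], and [4 s (1 - s) <= 1]. *)
Lemma softmax_jac_row_le i : \sum_j `|softmax_jac lam s i j| <= lam / 2.
Proof.
have sum_neq_i : \sum_(j | j != i) s j 0 = 1 - s i 0.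
  by rewrite -s1 [in RHS](bigD1 i) //= addrC addrK.
have si_le1 : s i 0 <= 1.
  by rewrite -subr_ge0 -sum_neq_i; apply: sumr_ge0.
rewrite (bigD1 i) //= softmax_jacE eqxx mulr1n.
rewrite (eq_bigr (fun j => lam * s i 0 * s j 0)) => [|j /negPf ji]; last first.
  by rewrite softmax_jacE ji sub0r !mulrN normrN !normrM !ger0_norm ?mulrA.
rewrite -mulr_sumr sum_neq_i ger0_norm ?mulr_ge0 ?subr_ge0 //.
have := mulr_ge0 lam0 (sqr_ge0 (2 * s i 0 - 1)); nra.
Qed.

Lemma pnorm_softmax_jac_le (p : \bar R) v : (1 <= p)%E ->
  pnorm p (softmax_jac lam s *m v) <= lam / 2 * pnorm p v.
Proof.
move=> p1; apply: pnorm_mulmx_le => //.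
- by rewrite divr_ge0.
- exact: softmax_jac_row_le.
- by move=> j; under eq_bigr do rewrite softmax_jacC; exact: softmax_jac_row_le.
Qed.

End ProbabilityVector.

Lemma softmax_ge0 lam x i : 0 <= softmax lam x i 0.
Proof. by rewrite mxE divr_ge0 ?expR_ge0 ?sumr_ge0 // => j _; exact: expR_ge0. Qed.

Lemma sum_softmax lam x : (0 < n)%N -> \sum_i softmax lam x i 0 = 1.
Proof.
move=> n0; under eq_bigr do rewrite mxE.
rewrite -mulr_suml mulfV // gt_eqF // (bigD1 (Ordinal n0)) //=.
by rewrite ltr_pwDl ?expR_gt0 ?sumr_ge0 // => j _; exact: expR_ge0.
Qed.

End SoftmaxJacobian.

Section SoftmaxDerivative.
Variables (R : realType) (n : nat).

Lemma is_derive_expR_affine (a b t : R) :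
  is_derive t 1 (fun u => expR (a * u + b)) (a * expR (a * t + b)).
Proof.
have affine : is_derive t 1 (fun u : R => a * u + b) a.
  apply: is_derive_eq
    (is_deriveD (is_deriveZ a (is_derive_id t 1)) (is_derive_cst b t 1)) _.
  by rewrite addr0 /GRing.scale /= mulr1.
by rewrite mulrC; exact: is_derive1_comp.
Qed.

Lemma derive_along_line (V : normedModType R) (f : V -> R) (x v : V) (df : R) :
  is_derive (0 : R) 1 (fun h : R => f (h *: v + x)) df -> 'D_v f x = df.
Proof.
move=> f_line; rewrite -(@derive_val _ _ _ _ _ _ _ f_line) /derive.
congr lim; f_equal.
apply/funext => h /=; rewrite /shift /= scale0r add0r addr0.
by rewrite /GRing.scale /= mulr1.
Qed.

Lemma softmax_lineE (lam t : R) (x v : 'cV[R]_n) i :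
  softmax lam (t *: v + x) i 0 =
  expR (lam * v i 0 * t + lam * x i 0) /
  \sum_j expR (lam * v j 0 * t + lam * x j 0).
Proof.
have lineE k : lam * (t *: v + x) k 0 = lam * v k 0 * t + lam * x k 0.
  by rewrite !mxE mulrDr [t * _]mulrC mulrA.
by rewrite mxE lineE; under eq_bigr do rewrite lineE.
Qed.

Lemma is_derive_softmax_line (lam t : R) (x v : 'cV[R]_n) i : (0 < n)%N ->
  is_derive t 1 (fun u => softmax lam (u *: v + x) i 0)
    ((softmax_jac lam (softmax lam (t *: v + x)) *m v) i 0).
Proof.
move=> n0.
pose E j u := expR (lam * v j 0 * u + lam * x j 0).
pose S u := \sum_j E j u.
have -> : (fun u => softmax lam (u *: v + x) i 0) = E i * (fun u => (S u)^-1).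
  by apply/funext => u; rewrite softmax_lineE.
have dS : is_derive t 1 S (\sum_j lam * v j 0 * E j t).
  have -> : S = \sum_j E j by apply/funext => u; rewrite fct_sumE.
  by apply: is_derive_sum => j; exact: is_derive_expR_affine.
have S_gt0 : 0 < S t.
  rewrite /S (bigD1 (Ordinal n0)) //= ltr_pwDl ?expR_gt0 ?sumr_ge0 // => j _.
  exact: expR_ge0.
apply: is_derive_eq (is_deriveM (is_derive_expR_affine _ _ t) (is_deriveV _ dS)) _.
  by rewrite gt_eqF.
rewrite softmax_jac_mulE.
have -> : \sum_j lam * v j 0 * E j t = lam * \sum_j v j 0 * E j t.
  by rewrite mulr_sumr; apply: eq_bigr => j _; rewrite mulrA.
have -> : \sum_j softmax lam (t *: v + x) j 0 * v j 0 =
          (\sum_j v j 0 * E j t) / S t.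
  rewrite mulr_suml; apply: eq_bigr => j _.
  by rewrite softmax_lineE mulrAC (mulrC (expR _)).
rewrite softmax_lineE -/(S t) -/(E i t) /GRing.scale /=.
by field; rewrite gt_eqF.
Qed.

Lemma jacobian_softmax (lam : R) (x : 'cV[R]_n) : (0 < n)%N ->
  jacobian_mx (softmax lam) x = softmax_jac lam (softmax lam x).
Proof.
move=> n0; apply/matrixP => i j; rewrite mxE; apply: derive_along_line.
have := is_derive_softmax_line lam 0 x (delta_mx j 0) i n0.
by rewrite scale0r add0r -colE mxE.
Qed.

Lemma softmax_mvt (lam : R) (x y : 'cV[R]_n) (w : 'I_n -> R) : (0 < n)%N ->
  exists c : R, \sum_i w i * (softmax lam x - softmax lam y) i 0 =
    \sum_i w i * (softmax_jac lam (softmax lam (c *: (x - y) + y)) *m (x - y)) i 0.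
Proof.
move=> n0.
pose F (t : R) := \sum_i w i * softmax lam (t *: (x - y) + y) i 0.
have dF (t : R) : is_derive t 1 F
    (\sum_i w i * (softmax_jac lam (softmax lam (t *: (x - y) + y)) *m (x - y)) i 0).
  have -> : F = \sum_i w i *: (fun t => softmax lam (t *: (x - y) + y) i 0).
    by apply/funext => u; rewrite fct_sumE.
  apply: is_derive_sum => i; apply: is_deriveZ.
  exact: is_derive_softmax_line.
have F_cont : continuous F.
  by move=> t; apply/differentiable_continuous/derivable1_diffP; case: (dF t).
have [c _ F10] := MVT ltr01 (fun t _ => dF t) (continuous_subspaceT F_cont).
exists c; rewrite subr0 mulr1 in F10; rewrite -F10 /F -sumrB.
by apply: eq_bigr => i _; rewrite scale1r scale0r add0r subrK -mulrBr !mxE.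
Qed.

End SoftmaxDerivative.

Unset Implicit Arguments.

Theorem theorem1 (R : realType) (n : nat) (hn : (1 <= n)%N) (lam : R)
  (hlam : 0 < lam) (p : \bar R) (hp : (1 <= p)%E) :
  (forall x : 'cV[R]_n, opnorm p (jacobian_mx (@softmax R n 1) x) <= 2^-1) /\
  (forall x y : 'cV[R]_n,
     pnorm p (softmax lam x - softmax lam y) <= lam / 2 * pnorm p (x - y)).
Proof.
split=> [x | x y].
  rewrite jacobian_softmax //; apply: opnorm_le => // v.
  rewrite -div1r; apply: pnorm_softmax_jac_le => //.
  - exact: softmax_ge0.
  - exact: sum_softmax.
apply: pnorm_le_dual => // w.
have [c mvt] := softmax_mvt lam x y w hn.
exists (softmax_jac lam (softmax lam (c *: (x - y) + y)) *m (x - y)) => //.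
apply: pnorm_softmax_jac_le => //.
- exact: ltW.
- exact: softmax_ge0.
- exact: sum_softmax.
Qed.
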